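(* Let $\alpha_0\in\mathbb R$. Let $M,K$ be the $5\times5$ matrices $$M=\begin{pmatrix}0&\frac12&-\frac12&0&0\\-\frac12&0&0&0&0\\\frac12&0&0&0&0\\0&0&0&0&0\\0&0&0&0&0\end{pmatrix},\quad K=\begin{pmatrix}0&0&0&-1&0\\0&0&0&0&1\\0&0&0&0&0\\1&0&0&0&0\\0&-1&0&0&0\end{pmatrix},$$ let $S(\mathbf z)=-wu-\frac{u^3}{2}-\frac{u\rho^2}{2}+\rho v$ for $\mathbf z=(u,\phi,\rho,v,w)^T$, let $A$ be the $5\times5$ matrix whose only nonzero entries are $A_{12}=A_{21}=\alpha_0$, and $B=0$. Let $\mathbf z_h=(u_h,\phi_h,\rho_h,v_h,w_h)^T$ be continuously differentiable in $t$ with values in $(V_h)^5$ and satisfy, for every $j$ and every $\boldsymbol\varphi\in(V_h)^5$, $$\int_{I_j}M\partial_t\mathbf z_h\cdot\boldsymbol\varphi\,dx-\int_{I_j}K\mathbf z_h\cdot\partial_x\boldsymbol\varphi\,dx+\big(\widehat{K\mathbf z_h}\cdot\boldsymbol\varphi^-\big)_{j+\frac12}-\big(\widehat{K\mathbf z_h}\cdot\boldsymbol\varphi^+\big)_{j-\frac12}=\int_{I_j}\nabla_{\mathbf z}S(\mathbf z_h)\cdot\boldsymbol\varphi\,dx,$$ with $\widehat{K\mathbf z_h}=K\{\mathbf z_h\}+A[\mathbf z_h]$ at each interface (equivalently, fluxes $\widehat{v_h}=\{v_h\}-\alpha_0[\phi_h]$, $\widehat{w_h}=\{w_h\}+\alpha_0[u_h]$,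 $\widehat{u_h}=\{u_h\}$, $\widehat{\phi_h}=\{\phi_h\}$). Then the discrete energy $$\mathcal E_h=-\frac12\int_\Omega u_h\big(u_h^2+\rho_h^2\big)dx+\alpha_0\sum_j\big([u_h][\phi_h]\big)_{j+\frac12}$$ is constant in time.
   Context: This is a DG discretization of the Camassa–Holm equation $u_t-u_{xxt}+3uu_x-2u_xu_{xx}-uu_{xxx}=0$ in the multi-symplectic form $M\mathbf z_t+K\mathbf z_x=\nabla_{\mathbf z}S(\mathbf z)$ above. Mesh and spaces: a one-dimensional domain $\Omega$ is partitioned into cells $I_j=[x_{j-1/2},x_{j+1/2}]$, $j=1,\dots,N$, with periodic boundary conditions (interface indices modulo $N$). For fixed $k\ge0$, $V_h=\{v\in L^2(\Omega): v|_{I_j}\text{ is a polynomial of degree}\le k\ \forall j\}$. For vector functions in $(V_h)^5$, superscripts $\pm$ at $x_{j+1/2}$ denote right/left limits, $\{\mathbf v\}=\frac12(\mathbf v^++\mathbf v^-)$, $[\mathbf v]=\mathbf v^+-\mathbf v^-$; subscript $j\pm\frac12$ denotes evaluation at $x_{j\pm1/2}$. *)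

From HB Require Import structures.
From mathcomp Require Import all_boot all_order all_algebra.
From mathcomp Require Import all_classical all_reals all_analysis.
Set Implicit Arguments. Unset Strict Implicit. Unset Printing Implicit Defensive.
Import Order.TTheory GRing.Theory Num.Theory.
Import numFieldNormedType.Exports.
Local Open Scope classical_set_scope.
Local Open Scope ring_scope.

Definition iu   : 'I_5 := @Ordinal 5 0 isT.
Definition iphi : 'I_5 := @Ordinal 5 1 isT.
Definition irho : 'I_5 := @Ordinal 5 2 isT.
Definition iv   : 'I_5 := @Ordinal 5 3 isT.
Definition iw   : 'I_5 := @Ordinal 5 4 isT.

Section DG.
Variable R : realType.

(* Polynomials of degree <= k (local space on one cell). *)
Definition Pk (k : nat) (p : {poly R}) : Prop := (size p <= k.+1)%N.

(* The matrices M, K, A (A_{12} = A_{21} = alpha0, 1-based in the paper). *)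
Definition Mmat : 'M[R]_5 := \matrix_(i < 5, j < 5)
  match nat_of_ord i, nat_of_ord j with
  | 0, 1 => 2^-1 | 0, 2 => - 2^-1 | 1, 0 => - 2^-1 | 2, 0 => 2^-1
  | _, _ => 0 end.

Definition Kmat : 'M[R]_5 := \matrix_(i < 5, j < 5)
  match nat_of_ord i, nat_of_ord j with
  | 0, 3 => -1 | 1, 4 => 1 | 3, 0 => 1 | 4, 1 => -1
  | _, _ => 0 end.

Definition Amat (alpha0 : R) : 'M[R]_5 := \matrix_(i < 5, j < 5)
  match nat_of_ord i, nat_of_ord j with
  | 0, 1 => alpha0 | 1, 0 => alpha0
  | _, _ => 0 end.

Definition Sfun (z : 'I_5 -> R) : R :=
  - z iw * z iu - z iu ^+ 3 / 2 - z iu * z irho ^+ 2 / 2 + z irho * z iv.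

Definition gradS (z : 'I_5 -> R) (c : 'I_5) : R :=
  match nat_of_ord c with
  | 0 => - z iw - 3%:R * z iu ^+ 2 / 2 - z irho ^+ 2 / 2
  | 1 => 0
  | 2 => - (z iu * z irho) + z iv
  | 3 => z irho
  | _ => - z iu
  end.

Definition cellint (a b : R) (f : R -> R) : R :=
  Rintegral (@lebesgue_measure R) `[a, b] f.

Variable N : nat.
(* Mesh nodes: xs j = x_{j-1/2} (0-based: cell j : 'I_N is [xs j, xs j.+1]);
   periodicity: interface to the right of cell j joins cell j and cell ordS j. *)
Variable xs : nat -> R.

(* A DG function in (V_h)^5: one polynomial per cell and component. *)
Definition DGfun := 'I_N -> 'I_5 -> {poly R}.

Definition trm (v : DGfun) (j : 'I_N) (c : 'I_5) : R := (v j c).[xs j.+1].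
Definition trp (v : DGfun) (j : 'I_N) (c : 'I_5) : R :=
  (v (ordS j) c).[xs (ordS j)].
Definition avg (v : DGfun) j c : R := (trp v j c + trm v j c) / 2.
Definition jump (v : DGfun) j c : R := trp v j c - trm v j c.

Definition fluxK (alpha0 : R) (v : DGfun) (j : 'I_N) (c : 'I_5) : R :=
  \sum_(d < 5) Kmat c d * avg v j d + \sum_(d < 5) Amat alpha0 c d * jump v j d.

Definition dtz (z : R -> DGfun) (t : R) (j : 'I_N) (d : 'I_5) (x : R) : R :=
  derive1 (fun s => (z s j d).[x]) t.

Definition DG_lhs (alpha0 : R) (z : R -> DGfun) (t : R) (phi : DGfun)
    (j : 'I_N) : R :=
  cellint (xs j) (xs j.+1)
    (fun x => \sum_(c < 5) (\sum_(d < 5) Mmat c d * dtz z t j d x) * (phi j c).[x])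
  - cellint (xs j) (xs j.+1)
    (fun x => \sum_(c < 5) (\sum_(d < 5) Kmat c d * (z t j d).[x])
                             * ((phi j c)^`()).[x])
  + \sum_(c < 5) fluxK alpha0 (z t) j c * (phi j c).[xs j.+1]
  - \sum_(c < 5) fluxK alpha0 (z t) (ord_pred j) c * (phi j c).[xs j].

Definition DG_rhs (z : R -> DGfun) (t : R) (phi : DGfun) (j : 'I_N) : R :=
  cellint (xs j) (xs j.+1)
    (fun x => \sum_(c < 5) gradS (fun d => (z t j d).[x]) c * (phi j c).[x]).

(* Discrete energy; the integral over Omega is the sum of the cell integrals. *)
Definition energy (alpha0 : R) (z : R -> DGfun) (t : R) : R :=
  - (2^-1) * \sum_(j < N) cellint (xs j) (xs j.+1)
       (fun x => (z t j iu).[x] * ((z t j iu).[x] ^+ 2 + (z t j irho).[x] ^+ 2))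
  + alpha0 * \sum_(j < N) jump (z t) j iu * jump (z t) j iphi.

End DG.

From HB Require Import structures.
From mathcomp Require Import all_boot all_order all_algebra.
From mathcomp Require Import all_classical all_reals all_analysis.
From mathcomp Require Import ring lra.
Set Implicit Arguments. Unset Strict Implicit. Unset Printing Implicit Defensive.
Import Order.TTheory GRing.Theory Num.Theory.
Import numFieldNormedType.Exports.
Local Open Scope ring_scope.

(* Testing the scheme on a cell with (∂t u_h, ∂t φ_h, ∂t ρ_h, 0, 0) kills the
   mass term (M is skew) and expresses the time derivative of the cubic energy
   density through v_h and w_h.  The v- and w-rows of the scheme contain no time
   derivative and are linear in z_h, so they can be differentiated in time;
   testing them with (0, 0, 0, v_h, w_h) turns what is left into the exact
   derivative ∂x(v_h ∂t u_h - w_h ∂t φ_h).  Each cell therefore contributes a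
   difference of end-point terms.  On the periodic mesh these pair up at every
   interface, where the chosen fluxes leave exactly -α0 ∂t([u_h][φ_h]).
   Cell integrals of polynomials are computed through an explicit primitive:
   this makes them finite linear combinations of coefficients, which commute
   with the time derivative. *)

Section PolyPrimitive.
Variable R : numFieldType.
Implicit Types p q : {poly R}.

(* Coefficient 0 is [p`_(0.-1) / 0], i.e. [0], since [x / 0 = 0]. *)
Definition primitive p : {poly R} := \poly_(i < (size p).+1) (p`_i.-1 / i%:R).

Lemma coef_primitive p i : (primitive p)`_i = p`_i.-1 / i%:R.
Proof.
rewrite coef_poly; case: ltnP => // lt_p_i.
by rewrite nth_default ?mul0r // -ltnS (leq_trans lt_p_i) // leqSpred.
Qed.

Lemma deriv_primitive p : (primitive p)^`() = p.
Proof.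
by apply/polyP => i; rewrite coef_deriv coef_primitive /= -[LHS]mulr_natr divfK.
Qed.

Lemma primitiveB p q : primitive (p - q) = primitive p - primitive q.
Proof. by apply/polyP => i; rewrite coefB !coef_primitive coefB mulrBl. Qed.

Lemma primitiveZ c p : primitive (c *: p) = c *: primitive p.
Proof. by apply/polyP => i; rewrite coefZ !coef_primitive coefZ mulrA. Qed.

End PolyPrimitive.

Section CellIntegral.
Variable R : realType.
Implicit Types (a b c : R) (p q : {poly R}).

Lemma cellint_deriv a b p : a < b -> cellint a b (horner p^`()) = p.[b] - p.[a].
Proof.
move=> ab; rewrite /cellint /Rintegral.
rewrite (@continuous_FTC2 R (horner p^`()) (horner p) a b ab).
- by rewrite -EFinD.
- by apply: continuous_subspaceT => x; exact: continuous_horner.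
- split.
  + by move=> x _; exact: derivable_horner.
  + by apply: cvg_at_right_filter; exact: continuous_horner.
  + by apply: cvg_at_left_filter; exact: continuous_horner.
- by move=> x _; rewrite -derivE.
Qed.

Lemma cellint_horner a b p : a < b ->
  cellint a b (horner p) = (primitive p).[b] - (primitive p).[a].
Proof. by move=> ab; rewrite -cellint_deriv // deriv_primitive. Qed.

Lemma cellintB a b p q : a < b ->
  cellint a b (horner (p - q)) = cellint a b (horner p) - cellint a b (horner q).
Proof. by move=> ab; rewrite !cellint_horner // primitiveB !hornerE; ring. Qed.

Lemma cellintZ a b c p : a < b ->
  cellint a b (horner (c *: p)) = c * cellint a b (horner p).
Proof. by move=> ab; rewrite !cellint_horner // primitiveZ !hornerZ mulrBr. Qed.

End CellIntegral.

Section PolyTimeDerivative.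
Variable R : realType.
Implicit Types (t x : R) (q r : R -> {poly R}) (dq dr : {poly R}).

Lemma is_derive_sum_fun n (h : 'I_n -> R -> R) t (dh : 'I_n -> R) :
  (forall i, is_derive t 1 (h i) (dh i)) ->
  is_derive t 1 (fun s => \sum_(i < n) h i s) (\sum_(i < n) dh i).
Proof.
move=> hdh; rewrite (_ : (fun s => _) = \sum_(i < n) h i); first exact: is_derive_sum.
by apply/funext => s; rewrite fct_sumE.
Qed.

Lemma is_derive_eq0 (f : R -> R) t df :
  (forall s, f s = 0) -> is_derive t 1 f df -> df = 0.
Proof.
move=> f0 fdf; rewrite -(@derive_val _ _ _ _ _ _ _ fdf) (_ : f = cst 0) ?derive_cst //.
exact: funext.
Qed.

Definition is_poly_derive t q dq :=
  (exists n, forall s, (size (q s) <= n)%N) /\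
  forall i, is_derive t 1 (fun s => (q s)`_i) dq`_i.

Lemma size_poly_derive t q dq n : is_poly_derive t q dq ->
  (forall s, (size (q s) <= n)%N) -> (size dq <= n)%N.
Proof.
move=> [_ dq_coef] q_small; apply/leq_sizeP => i le_n_i.
by apply: is_derive_eq0 (dq_coef i) => s; apply/leq_sizeP/(leq_trans (q_small s)).
Qed.

Lemma is_derive_horner t q dq x : is_poly_derive t q dq ->
  is_derive t 1 (fun s => (q s).[x]) dq.[x].
Proof.
move=> dq_q; have [[n q_small] dq_coef] := dq_q.
rewrite (horner_coef_wide x (size_poly_derive dq_q q_small)).
rewrite (_ : (fun s => _) = fun s => \sum_(i < n) (q s)`_i * x ^+ i).
  apply: is_derive_sum_fun => i.
  apply: is_derive_eq (is_deriveM (dq_coef i) (is_derive_cst (x ^+ i) t 1)) _.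
  by rewrite scaler0 add0r mulrC.
by apply: funext => s; rewrite (horner_coef_wide x (q_small s)).
Qed.

Lemma is_poly_derive_cst t p : is_poly_derive t (fun _ => p) 0.
Proof.
split; first by exists (size p).
by move=> i; rewrite coef0; exact: is_derive_cst.
Qed.

Lemma is_poly_deriveD t q r dq dr : is_poly_derive t q dq -> is_poly_derive t r dr ->
  is_poly_derive t (fun s => q s + r s) (dq + dr).
Proof.
move=> [[m q_small] dq_coef] [[n r_small] dr_coef]; split.
  exists (maxn m n) => s; apply: leq_trans (size_polyD _ _) _.
  by rewrite geq_max !leq_max q_small r_small orbT.
move=> i; rewrite coefD (_ : (fun s => _) = (fun s => (q s)`_i) + (fun s => (r s)`_i)).
  exact: is_deriveD.
by apply: funext => s; rewrite coefD.
Qed.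

Lemma is_poly_deriveB t q r dq dr : is_poly_derive t q dq -> is_poly_derive t r dr ->
  is_poly_derive t (fun s => q s - r s) (dq - dr).
Proof.
move=> [[m q_small] dq_coef] [[n r_small] dr_coef]; split.
  exists (maxn m n) => s; apply: leq_trans (size_polyD _ _) _.
  by rewrite size_polyN geq_max !leq_max q_small r_small orbT.
move=> i; rewrite coefB (_ : (fun s => _) = (fun s => (q s)`_i) - (fun s => (r s)`_i)).
  exact: is_deriveB.
by apply: funext => s; rewrite coefB.
Qed.

Lemma is_poly_deriveM t q r dq dr : is_poly_derive t q dq -> is_poly_derive t r dr ->
  is_poly_derive t (fun s => q s * r s) (dq * r t + q t * dr).
Proof.
move=> [[m q_small] dq_coef] [[n r_small] dr_coef]; split.
  exists (m + n)%N => s; apply: leq_trans (size_polyMleq _ _) _.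
  by apply: leq_trans (leq_pred _) (leq_add _ _).
move=> i; rewrite (_ : (fun s => _) =
    \sum_(j < i.+1) ((fun s => (q s)`_j) * (fun s => (r s)`_(i - j)))); last first.
  by apply: funext => s; rewrite coefM fct_sumE.
apply: is_derive_eq; rewrite coefD !coefM -big_split.
by apply: eq_bigr => j _; rewrite addrC mulrC.
Qed.

Lemma is_poly_derive_primitive t q dq : is_poly_derive t q dq ->
  is_poly_derive t (fun s => primitive (q s)) (primitive dq).
Proof.
move=> [[n q_small] dq_coef]; split.
  by exists n.+1 => s; apply: leq_trans (size_poly _ _) _; rewrite ltnS.
move=> i; rewrite coef_primitive (_ : (fun s => _) = (i%:R^-1) \*: (fun s => (q s)`_i.-1)).
  by apply: is_derive_eq; rewrite [RHS]mulrC.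
by rewrite funeqE => s; rewrite coef_primitive mulrC.
Qed.

Lemma is_derive_cellint a b t q dq : a < b -> is_poly_derive t q dq ->
  is_derive t 1 (fun s => cellint a b (horner (q s)))
                (cellint a b (horner dq)).
Proof.
move=> ab /is_poly_derive_primitive dP; rewrite cellint_horner //.
rewrite (_ : (fun s => _) =
  (fun s => (primitive (q s)).[b]) - (fun s => (primitive (q s)).[a])).
  by apply: is_deriveB; exact: is_derive_horner.
by apply: funext => s; rewrite cellint_horner.
Qed.

End PolyTimeDerivative.

Lemma sum5 (V : nmodType) (F : 'I_5 -> V) :
  \sum_(c < 5) F c = F iu + F iphi + F irho + F iv + F iw.
Proof.
rewrite !big_ord_recl big_ord0 addr0 !addrA.
by congr (_ + _ + _ + _ + _); congr F; apply: val_inj.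
Qed.

Lemma sum_ord_pred (V : nmodType) n (F : 'I_n -> 'I_n -> V) :
  \sum_(j < n) F (ord_pred j) j = \sum_(i < n) F i (ordS i).
Proof.
rewrite (reindex_inj (can_inj (@ordSK n))).
by apply: eq_bigr => i _; rewrite ordSK.
Qed.

Section Flux.
Variables (R : realType) (N : nat) (xs : nat -> R) (alpha : R).
Variables (v : DGfun R N) (j : 'I_N).

Lemma fluxK_u : fluxK xs alpha v j iu = - avg xs v j iv + alpha * jump xs v j iphi.
Proof. by rewrite /fluxK !sum5 !mxE /=; ring. Qed.

Lemma fluxK_phi : fluxK xs alpha v j iphi = avg xs v j iw + alpha * jump xs v j iu.
Proof. by rewrite /fluxK !sum5 !mxE /=; ring. Qed.

Lemma fluxK_rho : fluxK xs alpha v j irho = 0.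
Proof. by rewrite /fluxK !sum5 !mxE /=; ring. Qed.

Lemma fluxK_v : fluxK xs alpha v j iv = avg xs v j iu.
Proof. by rewrite /fluxK !sum5 !mxE /=; ring. Qed.

Lemma fluxK_w : fluxK xs alpha v j iw = - avg xs v j iphi.
Proof. by rewrite /fluxK !sum5 !mxE /=; ring. Qed.

End Flux.

Section EnergyConservation.
Variables (R : realType) (N k : nat) (xs : nat -> R) (alpha : R).
Variable z : R -> DGfun R N.
Hypothesis xs_lt : forall i, (i < N)%N -> xs i < xs i.+1.
Hypothesis z_Pk : forall t j c, Pk k (z t j c).
Hypothesis z_derivable : forall j c i t, derivable (fun s => (z s j c)`_i) t 1.
Hypothesis z_solves : forall t phi, (forall j c, Pk k (phi j c)) ->
  forall j, DG_lhs xs alpha z t phi j = DG_rhs xs z t phi j.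

Implicit Types (t s x : R) (i j : 'I_N) (c : 'I_5) (p q : {poly R}).

Local Notation cell j p := (cellint (xs j) (xs j.+1) (horner p)).

Lemma cell_lt j : xs j < xs j.+1.
Proof. exact: xs_lt. Qed.

Lemma cellB j p q : cell j (p - q) = cell j p - cell j q.
Proof. exact: cellintB (cell_lt j). Qed.

Lemma cellZ j a p : cell j (a *: p) = a * cell j p.
Proof. exact: cellintZ (cell_lt j). Qed.

Lemma cell_deriv j p : cell j p^`() = p.[xs j.+1] - p.[xs j].
Proof. exact: cellint_deriv (cell_lt j). Qed.

Definition dz t : DGfun R N :=
  fun j c => \poly_(i < k.+1) derive1 (fun s => (z s j c)`_i) t.

Lemma is_poly_derive_z t j c : is_poly_derive t (fun s => z s j c) (dz t j c).
Proof.
split; first by exists k.+1 => s; exact: z_Pk.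
move=> i; rewrite coef_poly; case: ltnP => [_|le_k_i].
  by rewrite derive1E; exact: derivableP.
rewrite (_ : (fun s => _) = cst 0); first exact: is_derive_cst.
by rewrite funeqE => s; apply/leq_sizeP/(leq_trans (z_Pk s j c)).
Qed.

Lemma dtzE t j c x : dtz z t j c x = (dz t j c).[x].
Proof.
have := is_derive_horner x (is_poly_derive_z t j c).
by rewrite /dtz derive1E => ?; exact: derive_val.
Qed.

Lemma is_derive_avg t i c :
  is_derive t 1 (fun s => avg xs (z s) i c) (avg xs (dz t) i c).
Proof.
have dh := fun j c x => is_derive_horner x (is_poly_derive_z t j c).
by rewrite /avg /trp /trm; apply: is_derive_eq; rewrite !scaler0 add0r; exact: mulrC.
Qed.

Lemma is_derive_jump t i c :
  is_derive t 1 (fun s => jump xs (z s) i c) (jump xs (dz t) i c).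
Proof.
have dh := fun j c x => is_derive_horner x (is_poly_derive_z t j c).
by rewrite /jump /trp /trm; apply: is_derive_eq.
Qed.

Definition flux_pairing t i (psi : 'I_5 -> {poly R}) x :=
  \sum_(c < 5) fluxK xs alpha (z t) i c * (psi c).[x].

(* The integrands [M ∂t z_h · ψ], [K z_h · ∂x ψ] and [∇S(z_h) · ψ] of the
   cell equation. *)
Definition mass_integrand t j (psi : 'I_5 -> {poly R}) : {poly R} :=
  2^-1%:P * ((dz t j iphi - dz t j irho) * psi iu - dz t j iu * psi iphi
             + dz t j iu * psi irho).

Definition stiffness_integrand t j (psi : 'I_5 -> {poly R}) : {poly R} :=
  z t j iu * (psi iv)^`() - z t j iv * (psi iu)^`()
  + z t j iw * (psi iphi)^`() - z t j iphi * (psi iw)^`().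

Definition source_integrand t j (psi : 'I_5 -> {poly R}) : {poly R} :=
  (- z t j iw - (3 / 2)%:P * z t j iu ^+ 2 - 2^-1%:P * z t j irho ^+ 2) * psi iu
  + (z t j iv - z t j iu * z t j irho) * psi irho
  + z t j irho * psi iv - z t j iu * psi iw.

Definition scheme_integrand t j psi :=
  mass_integrand t j psi - stiffness_integrand t j psi - source_integrand t j psi.

Lemma scheme_residualE t j psi :
  DG_lhs xs alpha z t (fun=> psi) j - DG_rhs xs z t (fun=> psi) j =
  cell j (mass_integrand t j psi) - cell j (stiffness_integrand t j psi)
  + flux_pairing t j psi (xs j.+1) - flux_pairing t (ord_pred j) psi (xs j)
  - cell j (source_integrand t j psi).
Proof.
rewrite /DG_lhs /DG_rhs; congr (_ - _ + _ - _ - _); congr cellint;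
  rewrite funeqE => x; rewrite !sum5 ?mxE ?dtzE.
all: cbv [gradS iu iphi irho iv iw nat_of_ord].
all: by rewrite !(hornerD, hornerN, hornerM, hornerC, horner_exp); ring.
Qed.

Lemma scheme_cell t j psi : (forall c, Pk k (psi c)) ->
  cell j (scheme_integrand t j psi) =
  flux_pairing t (ord_pred j) psi (xs j) - flux_pairing t j psi (xs j.+1).
Proof.
move=> psi_Pk; rewrite /scheme_integrand 2!cellB.
have := scheme_residualE t j psi; rewrite z_solves // subrr; lra.
Qed.

Definition dz_test t j : 'I_5 -> {poly R} :=
  fun c => if (c < 3)%N then dz t j c else 0.

Definition constraint_test (pv pw : {poly R}) : 'I_5 -> {poly R} :=
  fun c => if c == iv then pv else if c == iw then pw else 0.

Lemma Pk_dz_test t j c : Pk k (dz_test t j c).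
Proof. by rewrite /Pk /dz_test; case: ifP; rewrite ?size_poly0 ?size_poly. Qed.

Lemma Pk_constraint_test pv pw c : Pk k pv -> Pk k pw -> Pk k (constraint_test pv pw c).
Proof.
by rewrite /Pk /constraint_test => ? ?; case: ifP => // _; case: ifP; rewrite ?size_poly0.
Qed.

Definition constraint_integrand (y : 'I_5 -> {poly R}) (pv pw : {poly R}) :=
  y iu * pv^`() - y iphi * pw^`() + y irho * pv - y iu * pw.

Definition constraint_residual (y : DGfun R N) j (pv pw : {poly R}) : R :=
  cell j (constraint_integrand (y j) pv pw)
  + (avg xs y (ord_pred j) iu * pv.[xs j] - avg xs y (ord_pred j) iphi * pw.[xs j])
  - (avg xs y j iu * pv.[xs j.+1] - avg xs y j iphi * pw.[xs j.+1]).

Lemma constraint_residual_z s j pv pw : Pk k pv -> Pk k pw ->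
  constraint_residual (z s) j pv pw = 0.
Proof.
move=> pv_Pk pw_Pk.
have := scheme_cell s j (fun c => Pk_constraint_test c pv_Pk pw_Pk).
have -> : scheme_integrand s j (constraint_test pv pw) =
    - constraint_integrand (z s j) pv pw.
  rewrite /scheme_integrand /mass_integrand /stiffness_integrand /source_integrand.
  by rewrite /constraint_test /constraint_integrand /= deriv0; ring.
rewrite -scaleN1r cellZ /flux_pairing !sum5 /constraint_test /=.
rewrite !fluxK_v !fluxK_w !horner0 /constraint_residual; lra.
Qed.

Ltac poly_derive_by_rules :=
  repeat first [ apply: is_poly_deriveB | apply: is_poly_deriveD
               | apply: is_poly_deriveM | exact: is_poly_derive_z
               | exact: is_poly_derive_cst ].

Lemma is_derive_constraint_residual t j pv pw :
  is_derive t 1 (fun s => constraint_residual (z s) j pv pw)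
                (constraint_residual (dz t) j pv pw).
Proof.
have dC : is_derive t 1 (fun s => cell j (constraint_integrand (z s j) pv pw))
                        (cell j (constraint_integrand (dz t j) pv pw)).
  apply: is_derive_eq (is_derive_cellint (cell_lt j) _) _.
    poly_derive_by_rules.
  by rewrite !mulr0 !addr0.
have dA := is_derive_avg t.
rewrite /constraint_residual; apply: is_derive_eq.
by rewrite !scaler0 !add0r !(mulrC (avg _ _ _ _)).
Qed.

(* The v- and w-rows contain no time derivative and are linear in z_h. *)
Lemma constraint_residual_dz t j pv pw : Pk k pv -> Pk k pw ->
  constraint_residual (dz t) j pv pw = 0.
Proof.
move=> pv_Pk pw_Pk; apply: is_derive_eq0 (is_derive_constraint_residual t j pv pw).
by move=> s; exact: constraint_residual_z.
Qed.

(* The end-point terms left at the end x of cell j by the dynamic test, the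
   differentiated constraint test and ∂x(v_h ∂t u_h - w_h ∂t φ_h), with the
   numerical traces of interface i. *)
Definition energy_flux t i j x :=
  flux_pairing t i (dz_test t j) x
  - (avg xs (dz t) i iu * (z t j iv).[x] - avg xs (dz t) i iphi * (z t j iw).[x])
  + (z t j iv * dz t j iu - z t j iw * dz t j iphi).[x].

Definition energy_density_dt t j : {poly R} :=
  dz t j iu * (3%:R * z t j iu ^+ 2 + z t j irho ^+ 2)
  + 2%:R * z t j iu * z t j irho * dz t j irho.

Lemma cell_energy_balance t j :
  - 2^-1 * cell j (energy_density_dt t j) =
  energy_flux t j j (xs j.+1) - energy_flux t (ord_pred j) j (xs j).
Proof.
have dyn := scheme_cell t j (Pk_dz_test t j).
have con := constraint_residual_dz t j (z_Pk t j iv) (z_Pk t j iw).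
set D := z t j iv * dz t j iu - z t j iw * dz t j iphi.
have -> : horner (energy_density_dt t j) = horner ((-2) *: (D^`()
    - scheme_integrand t j (dz_test t j)
    - constraint_integrand (dz t j) (z t j iv) (z t j iw))).
  rewrite funeqE => x.
  rewrite /D /scheme_integrand /mass_integrand /stiffness_integrand /source_integrand.
  rewrite /constraint_integrand /dz_test /energy_density_dt /= !deriv0 !(derivB, derivM).
  by rewrite !(hornerD, hornerN, hornerM, hornerC, horner_exp, hornerZ, horner0); field.
rewrite cellZ 2!cellB dyn cell_deriv.
move: con; rewrite /constraint_residual /energy_flux -/D; lra.
Qed.

Lemma interface_energy_balance t i :
  energy_flux t i i (xs i.+1) - energy_flux t i (ordS i) (xs (ordS i)) =
  - alpha * (jump xs (z t) i iu * jump xs (dz t) i iphi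
             + jump xs (z t) i iphi * jump xs (dz t) i iu).
Proof.
rewrite /energy_flux /flux_pairing !sum5 /dz_test /= fluxK_u fluxK_phi !fluxK_rho.
by rewrite !(hornerD, hornerN, hornerM, horner0) /avg /jump /trm /trp; field.
Qed.

Definition energy_density (y : 'I_5 -> {poly R}) : {poly R} :=
  y iu * (y iu * y iu + y irho * y irho).

Lemma energyE s : energy xs alpha z s =
  - 2^-1 * \sum_(j < N) cell j (energy_density (z s j))
  + alpha * \sum_(j < N) jump xs (z s) j iu * jump xs (z s) j iphi.
Proof.
rewrite /energy; congr (_ * _ + _); apply: eq_bigr => j _; congr cellint.
by rewrite funeqE => x; rewrite /energy_density !(hornerD, hornerM) !expr2.
Qed.

Lemma is_derive_energy t : is_derive t 1 (energy xs alpha z)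
  (- 2^-1 * \sum_(j < N) cell j (energy_density_dt t j)
   + alpha * \sum_(j < N) (jump xs (z t) j iu * jump xs (dz t) j iphi
                           + jump xs (z t) j iphi * jump xs (dz t) j iu)).
Proof.
have d_cells : is_derive t 1 (fun s => \sum_(j < N) cell j (energy_density (z s j)))
                             (\sum_(j < N) cell j (energy_density_dt t j)).
  apply: is_derive_sum_fun => j.
  apply: is_derive_eq (is_derive_cellint (cell_lt j) _) _; first poly_derive_by_rules.
  by rewrite /energy_density_dt; congr cellint; congr horner; ring.
have d_jumps : is_derive t 1
    (fun s => \sum_(j < N) jump xs (z s) j iu * jump xs (z s) j iphi)
    (\sum_(j < N) (jump xs (z t) j iu * jump xs (dz t) j iphi
                   + jump xs (z t) j iphi * jump xs (dz t) j iu)).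
  by apply: is_derive_sum_fun => j; apply: is_deriveM; exact: is_derive_jump.
by rewrite (funext energyE); apply: is_derive_eq.
Qed.

Lemma is_derive_energy0 t : is_derive t 1 (energy xs alpha z) 0.
Proof.
apply: is_derive_eq (is_derive_energy t) _.
rewrite mulr_sumr; under eq_bigr do rewrite cell_energy_balance.
rewrite sumrB (sum_ord_pred (fun i j => energy_flux t i j (xs j))) -sumrB.
rewrite mulr_sumr -big_split big1 // => i _.
by rewrite /= interface_energy_balance mulNr addNr.
Qed.

End EnergyConservation.

Theorem proposition4p4 (R : realType) (N k : nat) (xs : nat -> R)
    (alpha0 : R) (z : R -> 'I_N -> 'I_5 -> {poly R}) :
  (0 < N)%N ->
  (forall i : nat, (i < N)%N -> xs i < xs i.+1) ->
  (forall t j c, Pk k (z t j c)) ->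
  (forall (j : 'I_N) (c : 'I_5) (i : nat),
      (forall t : R, derivable (fun s => (z s j c)`_i) t 1) /\
      continuous (fun t => derive1 (fun s => (z s j c)`_i) t)) ->
  (forall (t : R) (phi : 'I_N -> 'I_5 -> {poly R}),
      (forall j c, Pk k (phi j c)) ->
      forall j : 'I_N,
        DG_lhs xs alpha0 z t phi j = DG_rhs xs z t phi j) ->
  forall t1 t2 : R, energy xs alpha0 z t1 = energy xs alpha0 z t2.
Proof.
move=> _ xs_lt z_Pk z_C1 z_solves t1 t2.
have z_derivable j c i t : derivable (fun s => (z s j c)`_i) t 1 := (z_C1 j c i).1 t.
apply: is_derive_0_is_cst => t.
exact: is_derive_energy0 xs_lt z_Pk z_derivable z_solves t.
Qed.
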